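(* Let $r \geq 2$, let $H$ be a digraph (possibly with loops), and let $D$ be an $H$-colored $r$-quasi-transitive digraph such that every directed cycle of length $r+1$ in $D$ is an $H$-cycle. For every $k \geq r$, $D$ has a $(k,H)$-kernel.
   Context: All digraphs are finite. A digraph $D$ is $r$-quasi-transitive if for all distinct $u,v\in V(D)$, whenever there is a directed $uv$-path of length $r$, $u$ and $v$ are joined by an arc (in some direction). $D$ has no loops and comes with a map $\rho: A(D)\to V(H)$. For a walk $W=(x_0,\ldots,x_n)$ in $D$, there is an obstruction on $x_i$ if $(\rho(x_{i-1},x_i),\rho(x_i,x_{i+1})) \notin A(H)$; for an open walk this is considered at internal vertices $x_i$, $1\le i\le n-1$, for a closed walk at all $i\in\{0,\ldots,n-1\}$ with indices modulo $n$. $O_H(W)$ is the set of indices with an obstruction; the $H$-length is $l_H(W)=|O_H(W)|+1$ for open $W$ and $|O_H(W)|$ for closed $W$. An $H$-cycle is a directed cycle with no obstructions. A $(k,H)$-kernel ($k\ge2$) is a set $S\subseteq V(D)$ such that for every two distinct $u,v\in S$ every directed $uv$-path in $D$ has $H$-length at least $k$, and for every $x\in V(D)\setminus S$ there is a directed path from $x$ to a vertex of $S$ of $H$-length at most $k-1$. *)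

From mathcomp Require Import all_boot.
Set Implicit Arguments. Unset Strict Implicit. Unset Printing Implicit Defensive.

Section Digraphs.
Variables (V VH : finType).
(* D = (V, A); H = (VH, AH) (H may have loops); rho u v is the colour rho(u,v)
   of the arc (u,v) of D (only its values on arcs of D matter). *)
Variables (A : rel V) (AH : rel VH) (rho : V -> V -> VH).

Fixpoint nobs (s : seq V) : nat :=
  match s with
  | a :: ((b :: c :: _) as t) => (~~ AH (rho a b) (rho b c)) + nobs t
  | _ => 0
  end.

Definition Hlength_open (x0 : V) (s : seq V) : nat := (nobs (x0 :: s)).+1.

(* Directed uv-path u :: s (distinct vertices, consecutive arcs, ending at v);
   its length is size s. *)
Definition dpath (u v : V) (s : seq V) : bool :=
  [&& path A u s, uniq (u :: s) & last u s == v].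

Definition dcycle (c : seq V) : bool := (0 < size c) && cycle A c && uniq c.

(* Number of obstructions of the closed walk (x0,...,x_{n-1},x0), counted at
   every index mod n: the triples of (x_{n-1}, x0, ..., x_{n-1}, x0). *)
Definition nobs_closed (c : seq V) : nat :=
  match c with
  | [::] => 0
  | x0 :: _ => nobs (last x0 c :: rcons c x0)
  end.

Definition H_cycle (c : seq V) : Prop := dcycle c /\ nobs_closed c = 0.

Definition r_quasi_transitive (r : nat) : Prop :=
  forall u v s, u != v -> dpath u v s -> size s = r -> A u v || A v u.

Definition kH_kernel (k : nat) (S : {set V}) : Prop :=
  (forall u v s, u \in S -> v \in S -> u != v -> dpath u v s ->
     k <= Hlength_open u s) /\
  (forall x, x \notin S -> exists v s, [/\ v \in S, dpath x v s &
     Hlength_open x s <= k.-1]).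

End Digraphs.

From mathcomp Require Import all_boot zify.
Set Implicit Arguments. Unset Strict Implicit. Unset Printing Implicit Defensive.

(* Choose one vertex in each terminal strong component of D: no path joins two
   of them and every vertex reaches one. A shortest path x_0 ... x_n to it has
   H-length at most r - 1. If n < r this just counts internal vertices.
   Otherwise, for every window x_i ... x_(i+r), r-quasi-transitivity gives an
   arc between x_i and x_(i+r); by minimality it is the back arc x_(i+r) x_i,
   which closes an (r+1)-cycle, hence an H-cycle, so the window has no
   obstruction. As r >= 2, these windows cover all internal vertices. *)

Section Reachability.
Variables (V : finType) (A : rel V).

Lemma connect_to_terminal x :
  exists2 y, connect A x y & forall z, connect A y z -> connect A z y.
Proof.
pose reach y := [set z | connect A y z].
have [y xy min_y] := arg_minnP (fun y => #|reach y|) (connect0 A x).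
exists y => // z yz.
have reach_zy : reach z \subset reach y.
  by apply/subsetP => w; rewrite !inE; apply: connect_trans.
have : reach z == reach y.
  by rewrite eqEcard reach_zy min_y //; apply: connect_trans yz.
by move/eqP/setP/(_ y); rewrite !inE connect0.
Qed.

Definition terminal_reps : {set V} :=
  [set u | [forall y, connect A u y ==> connect A y u && (enum_rank u <= enum_rank y)]].

Lemma terminal_reps_connect u v :
  u \in terminal_reps -> v \in terminal_reps -> connect A u v -> u = v.
Proof.
rewrite !inE => /forallP uS /forallP vS uv.
have /andP[vu le_uv] := implyP (uS v) uv.
have /andP[_ le_vu] := implyP (vS u) vu.
by apply/enum_rank_inj/val_inj/eqP; rewrite eqn_leq le_uv le_vu.
Qed.

Lemma connect_terminal_reps x : exists2 v, v \in terminal_reps & connect A x v.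
Proof.
have [y xy y_terminal] := connect_to_terminal x.
have [v yv min_v] := arg_minnP (fun z => val (enum_rank z)) (connect0 A y).
exists v; last exact: connect_trans yv.
rewrite inE; apply/forallP => w; apply/implyP => vw.
have yw := connect_trans yv vw.
by rewrite (connect_trans (y_terminal w yw) yv) min_v.
Qed.

Lemma shortest_dpath x v : connect A x v ->
  exists2 p, dpath A x v p & forall q, dpath A x v q -> size p <= size q.
Proof.
case/connectP=> p0 /shortenP[p p_path p_uniq _ ->].
pose has_dpath n := [exists q : n.-tuple V, dpath A x (last x p) q].
have has_some_dpath : exists n, has_dpath n.
  by exists (size p); apply/existsP; exists (in_tuple p); rewrite /dpath p_path p_uniq eqxx.
have [n /existsP[q q_dpath] min_n] := ex_minnP has_some_dpath.
exists q => // q' q'_dpath; rewrite size_tuple.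
by apply: min_n; apply/existsP; exists (in_tuple q').
Qed.

Lemma dpath_shortcut x v p s1 y m z s2 :
  dpath A x v p -> x :: p = s1 ++ y :: m ++ z :: s2 -> A y z ->
  exists2 q, dpath A x v q & size q + size m = size p.
Proof.
case/and3P=> p_path p_uniq /eqP p_last e yz.
have [q e_q] : exists q, s1 ++ [:: y, z & s2] = x :: q.
  by case: s1 e => [|a s1] [-> _]; eexists.
exists q; last first.
  by move: (congr1 size e) (congr1 size e_q); rewrite /= !size_cat /= size_cat /=; lia.
apply/and3P; split.
- have : sorted A (s1 ++ y :: m ++ z :: s2) by rewrite -e.
  rewrite -[path A x q]/(sorted A (x :: q)) -e_q !sorted_cat_cons /= yz.
  by case/andP=> -> /=; rewrite cat_path => /andP[_ /= /andP[_ ->]].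
- rewrite -e_q; apply: subseq_uniq p_uniq; rewrite e.
  by apply: cat_subseq (subseq_refl s1) _; rewrite /= eqxx suffix_subseq.
- rewrite -p_last -[last x q]/(last x (x :: q)) -[last x p]/(last x (x :: p)).
  by rewrite -e_q e !last_cat /= last_cat.
Qed.

End Reachability.

Section Obstructions.
Variables (V VH : finType) (AH : rel VH) (rho : V -> V -> VH).
Local Notation nobs := (nobs AH rho).

Lemma nobs_cons3 a b c t :
  nobs [:: a, b, c & t] = ~~ AH (rho a b) (rho b c) + nobs [:: b, c & t].
Proof. by []. Qed.

Lemma nobs_cons_ge a s : nobs s <= nobs (a :: s).
Proof. by case: s => [|b [|c t]] //; rewrite nobs_cons3 leq_addl. Qed.

Lemma nobs_catl s1 s2 : nobs s1 <= nobs (s1 ++ s2).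
Proof.
elim: s1 => [|a [|b [|c t]] IH] //.
by rewrite !cat_cons !nobs_cons3 leq_add2l.
Qed.

Lemma nobs_glue s1 m s2 : 1 < size m ->
  nobs (s1 ++ m ++ s2) <= nobs (s1 ++ m) + nobs (m ++ s2).
Proof.
move=> m_size; elim: s1 => [|a s1 IH]; first exact: leq_addl.
have : 1 < size (s1 ++ m) by rewrite size_cat; lia.
rewrite !cat_cons catA; rewrite catA in IH.
case: (s1 ++ m) IH => [|b [|c t]] // IH _.
by rewrite !nobs_cons3 -addnA leq_add2l.
Qed.

Lemma nobs_size s : nobs s <= (size s).-2.
Proof.
elim: s => [|a [|b [|c t]] IH] //.
by rewrite nobs_cons3; apply: leq_trans (leq_add (leq_b1 _) IH) _; rewrite add1n.
Qed.

End Obstructions.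

Section QuasiTransitive.
Variables (V VH : finType) (A : rel V) (AH : rel VH) (rho : V -> V -> VH) (r : nat).
Hypothesis r_gt1 : 1 < r.
Hypothesis qtA : r_quasi_transitive A r.
Hypothesis Hcycles :
  forall c : seq V, dcycle A c -> size c = r.+1 -> H_cycle A AH rho c.

Definition back_chorded (s : seq V) : Prop :=
  forall s1 y m s2, s = s1 ++ y :: m ++ s2 -> size m = r -> A (last y m) y.

Lemma nobs_window y m : path A y m -> uniq (y :: m) -> size m = r ->
  A (last y m) y -> nobs AH rho (y :: m) = 0.
Proof.
move=> ym_path ym_uniq m_size back.
have ym_cycle : dcycle A (y :: m) by rewrite /dcycle /= rcons_path ym_path back.
have [_ closed0] : H_cycle A AH rho (y :: m) by apply: Hcycles; rewrite //= m_size.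
apply/eqP; rewrite -leqn0 -closed0 /nobs_closed -cats1.
exact: leq_trans (nobs_catl _ _ _ [:: y]) (nobs_cons_ge _ _ _ _).
Qed.

Lemma nobs_back_chorded s : sorted A s -> uniq s -> back_chorded s ->
  r < size s -> nobs AH rho s = 0.
Proof.
elim: s => // a t IH s_sorted s_uniq s_chords r_lt_s.
have [m [s2 [t_eq m_size]]] : exists m s2, t = m ++ s2 /\ size m = r.
  by exists (take r t), (drop r t); rewrite cat_take_drop size_takel.
have window0 : nobs AH rho (a :: m) = 0.
  apply: nobs_window m_size (s_chords [::] a m s2 _ m_size); last by rewrite t_eq.
    by move: s_sorted; rewrite /= t_eq cat_path => /andP[].
  by move: s_uniq; rewrite t_eq -cat_cons cat_uniq => /andP[].
have t0 : nobs AH rho t = 0.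
  have [r_lt_t|t_le_r] := ltnP r (size t).
    apply: IH r_lt_t; first exact: path_sorted s_sorted.
      by case/andP: s_uniq.
    by move=> s1 y w s3 e; apply: (s_chords (a :: s1)); rewrite e.
  have s2_nil : s2 = [::].
    by apply/size0nil; move: t_le_r; rewrite t_eq size_cat; lia.
  apply/eqP; rewrite -leqn0 -window0 t_eq s2_nil cats0; exact: nobs_cons_ge.
apply/eqP; rewrite -leqn0 t_eq -[a :: _]/([:: a] ++ m ++ s2).
apply: leq_trans (nobs_glue _ _ _ _ _) _; first by rewrite m_size.
by rewrite -t_eq window0 t0.
Qed.

Lemma shortest_dpath_back_chorded x v p : dpath A x v p ->
  (forall q, dpath A x v q -> size p <= size q) -> back_chorded (x :: p).
Proof.
move=> xp_dpath xp_min s1 y m s2 e.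
case/and3P: (xp_dpath) => p_path p_uniq _.
have ym_uniq : uniq (y :: m).
  by move: p_uniq; rewrite -/(uniq (x :: p)) e cat_uniq -cat_cons cat_uniq => /and3P[_ _ /andP[]].
have ym_path : path A y m.
  move: p_path; rewrite -/(sorted A (x :: p)) e sorted_cat_cons cat_path.
  by case/andP=> _ /andP[].
case/lastP: m e ym_uniq ym_path => [|w z] e ym_uniq ym_path; first by move=> /= r0; lia.
rewrite size_rcons last_rcons => w_size.
have yz : y != z.
  by apply: contraTneq ym_uniq => ->; rewrite /= mem_rcons mem_head.
have yz_dpath : dpath A y z (rcons w z) by rewrite /dpath ym_path ym_uniq last_rcons eqxx.
case/orP: (qtA yz yz_dpath (etrans (size_rcons w z) w_size)) => // yz_arc.
rewrite cat_rcons in e.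
have [q q_dpath q_size] := dpath_shortcut xp_dpath e yz_arc.
by have := xp_min q q_dpath; lia.
Qed.

Lemma short_Hpath x v : connect A x v ->
  exists2 p, dpath A x v p & Hlength_open AH rho x p <= r.-1.
Proof.
move=> xv; have [p xp_dpath xp_min] := shortest_dpath xv.
exists p => //; rewrite /Hlength_open.
case/and3P: (xp_dpath) => p_path p_uniq _.
have chords := shortest_dpath_back_chorded xp_dpath xp_min.
have [r_lt | size_le] := ltnP r (size (x :: p)).
  by rewrite (nobs_back_chorded (p_path : sorted A (x :: p)) p_uniq chords r_lt); lia.
by have := nobs_size AH rho (x :: p); lia.
Qed.

End QuasiTransitive.

Theorem theorem22 (V VH : finType) (A : rel V) (AH : rel VH)
    (rho : V -> V -> VH) (r : nat) :
  2 <= r ->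
  irreflexive A ->
  r_quasi_transitive A r ->
  (forall c : seq V, dcycle A c -> size c = r.+1 -> H_cycle A AH rho c) ->
  forall k : nat, r <= k -> exists S : {set V}, kH_kernel A AH rho k S.
Proof.
move=> r_gt1 _ qtA Hcycles k r_le_k.
exists (terminal_reps A); split.
  move=> u v s uS vS /eqP uv /and3P[s_path _ /eqP s_last]; case: uv.
  by apply: terminal_reps_connect uS vS _; apply/connectP; exists s.
move=> x _; have [v vS xv] := connect_terminal_reps A x.
have [p xp_dpath xp_short] := short_Hpath r_gt1 qtA Hcycles xv.
by exists v, p; split => //; apply: leq_trans xp_short _; lia.
Qed.
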